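(* There do not exist three pairwise vertex-disjoint antipodal cycles of length $10$ in the graph $Q_2^5\setminus\{\overline{0},\overline{1}\}$, where $\overline{0}=(0,0,0,0,0)$ and $\overline{1}=(1,1,1,1,1)$.
   Context: $Q_2^5$ is the $5$-dimensional Boolean hypercube graph on $\{0,1\}^5$ (two vertices adjacent iff they differ in exactly one coordinate). An edge $\{x,y\}$ with $x,y$ differing in coordinate $i$ has direction $i$; two edges of the same direction $i$ are antipodal if the endpoints of one are obtained from the endpoints of the other by complementing all coordinates. A (simple) cycle in the hypercube is antipodal if every two of its edges having the same direction are antipodal. *)

From mathcomp Require Import all_boot.
Set Implicit Arguments. Unset Strict Implicit. Unset Printing Implicit Defensive.

Definition vert := {ffun 'I_5 -> bool}.

Definition adj (x y : vert) : bool := #|[set i | x i != y i]| == 1.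

Definition compl (x : vert) : vert := [ffun i => ~~ x i].

Definition zero_v : vert := [ffun => false].
Definition one_v : vert := [ffun => true].

Definition has_dir (x y : vert) (i : 'I_5) : bool := adj x y && (x i != y i).

Definition antipodal_edges (a b c d : vert) : Prop :=
  (c = compl a /\ d = compl b) \/ (c = compl b /\ d = compl a).

Definition simple_cycle (c : seq vert) : Prop :=
  2 < size c /\ uniq c /\ cycle adj c.

Definition edge_src (c : seq vert) (k : nat) : vert := nth zero_v c k.
Definition edge_tgt (c : seq vert) (k : nat) : vert :=
  nth zero_v c ((k.+1) %% size c).

Definition antipodal_cycle (c : seq vert) : Prop :=
  simple_cycle c /\
  forall (j k : nat) (i : 'I_5), j < size c -> k < size c -> j <> k ->
    has_dir (edge_src c j) (edge_tgt c j) i ->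
    has_dir (edge_src c k) (edge_tgt c k) i ->
    antipodal_edges (edge_src c j) (edge_tgt c j) (edge_src c k) (edge_tgt c k).

Definition avoids_01 (c : seq vert) : Prop :=
  zero_v \notin c /\ one_v \notin c.

Definition vdisjoint (c d : seq vert) : Prop := forall x, x \in c -> x \notin d.

From mathcomp Require Import all_boot.

Set Implicit Arguments. Unset Strict Implicit. Unset Printing Implicit Defensive.

(* Cut open at any vertex, an antipodal 10-cycle avoiding 0 and 1 becomes a
   path through 10 of the 30 remaining vertices in which any two edges of a
   common direction are antipodal.  This property is checked edge by edge as
   the path grows, so all such paths can be enumerated exhaustively; their
   vertex sets are only 132, and no three of them are pairwise disjoint.  The
   search runs on bit words of length 5, a computable copy of Q_2^5. *)

Section IncrementalEnumeration.

Variables (T : eqType) (dom : seq T) (ok : T -> seq T -> bool).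

Fixpoint admissible (s : seq T) : bool :=
  if s is x :: s' then ok x s' && admissible s' else true.

Definition extend (l : seq (seq T)) : seq (seq T) :=
  [seq x :: s | s <- l, x <- [seq x <- dom | ok x s]].

Definition enum_admissible n : seq (seq T) := iter n extend [:: [::]].

Lemma mem_enum_admissible s :
  admissible s -> all (mem dom) s -> s \in enum_admissible (size s).
Proof.
elim: s => [|x s IHs] //= /andP[ok_x adm_s] /andP[dom_x dom_s].
apply/allpairsPdep; exists s, x; split=> //; first exact: IHs.
by rewrite mem_filter ok_x.
Qed.

End IncrementalEnumeration.

(* Unlike [undup], compares each item only with the items already kept. *)
Definition dedup (T : eqType) (s : seq T) : seq T :=
  foldr (fun x kept => if x \in kept then kept else x :: kept) [::] s.

Lemma mem_dedup (T : eqType) (s : seq T) : dedup s =i s.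
Proof.
elim: s => //= x s IHs y; rewrite in_cons -IHs.
by case: ifP => // x_kept; case: eqP => // ->.
Qed.

Definition no_pairwise_triple (T : Type) (r : rel T) (s : seq T) : bool :=
  all (fun a => all (fun b =>
    if r a b then all (fun c => ~~ (r a c && r b c)) s else true) s) s.

Lemma no_pairwise_triple_mem (T : eqType) (r : rel T) s a b c :
    no_pairwise_triple r s -> a \in s -> b \in s -> c \in s ->
  r a b -> r a c -> r b c -> False.
Proof.
move=> /allP/[apply]/allP/[apply] + c_s r_ab r_ac r_bc.
by rewrite r_ab => /allP/(_ c c_s); rewrite r_ac r_bc.
Qed.

Definition path_edges (T : Type) (s : seq T) : seq (T * T) := zip s (behead s).

Lemma size_path_edges (T : Type) (s : seq T) :
  size (path_edges s) = (size s).-1.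
Proof. by case: s => //= x s; rewrite size_zip (minn_idPr (leqnSn _)). Qed.

Lemma nth_path_edges (T : Type) (x0 : T) (s : seq T) j :
  j < (size s).-1 -> nth (x0, x0) (path_edges s) j = (nth x0 s j, nth x0 s j.+1).
Proof.
move=> lt_j; rewrite /path_edges nth_zip_cond size_zip size_behead.
by rewrite (minn_idPr (leq_pred _)) lt_j nth_behead.
Qed.

Fixpoint words n : seq (seq bool) :=
  if n is n'.+1 then [seq b :: w | b <- [:: false; true], w <- words n']
  else [:: [::]].

Lemma mem_words n w : (w \in words n) = (size w == n).
Proof.
elim: n w => [|n IHn] w; first by case: w.
apply/allpairsP/idP => [[[b w'] [_ /= w'_n ->]]|].
  by rewrite /= eqSS -IHn.
by case: w => // b w; rewrite eqSS -IHn => w_n; exists (b, w); case: b.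
Qed.

Definition differ_at (u v : seq bool) (i : nat) : bool := nth false u i != nth false v i.

Definition wadj (u v : seq bool) : bool := count (differ_at u v) (iota 0 (size u)) == 1.

Definition wcompl : seq bool -> seq bool := map negb.

Definition wantipodal (e f : seq bool * seq bool) : bool :=
  (f == (wcompl e.1, wcompl e.2)) || (f == (wcompl e.2, wcompl e.1)).

(* The VM evaluates both arguments of [andb] and [implb]; the [if]s here and in
   [antipodal_step] let the search reject candidates early. *)
Definition wcompatible (e f : seq bool * seq bool) : bool :=
  if has (fun i => differ_at e.1 e.2 i && differ_at f.1 f.2 i) (iota 0 (size e.1))
  then wantipodal e f else true.

(* Only edges inside the path are constrained, not the edge closing the cycle. *)
Definition antipodal_step (w : seq bool) (p : seq (seq bool)) : bool :=
  if p is v :: _ then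
    if wadj w v then (w \notin p) && all (wcompatible (w, v)) (path_edges p) else false
  else true.

Definition antipodal_wpath : pred (seq (seq bool)) := admissible antipodal_step.

Lemma antipodal_wpathE p :
  antipodal_wpath p = [&& sorted wadj p, uniq p & pairwise wcompatible (path_edges p)].
Proof.
elim: p => [|w [|v p] IHp] //=; rewrite /antipodal_wpath /= in IHp *.
by rewrite {}IHp /= -!andbA; do !bool_congr.
Qed.

Definition punctured_cube : seq (seq bool) :=
  [seq w <- words 5 | w \notin [:: nseq 5 false; nseq 5 true]].

Definition indicator (p : seq (seq bool)) : seq bool :=
  [seq w \in p | w <- punctured_cube].

Definition disjoint_indicators (a b : seq bool) : bool :=
  all (fun xy => ~~ (xy.1 && xy.2)) (zip a b).

Definition antipodal_indicators : seq (seq bool) :=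
  dedup [seq indicator p | p <- enum_admissible punctured_cube antipodal_step 10].

Lemma antipodal_indicators_no_disjoint_triple :
  no_pairwise_triple disjoint_indicators antipodal_indicators.
Proof. by vm_compute. Qed.

Definition bits (x : vert) : seq bool := [seq x i | i <- enum 'I_5].

Lemma size_bits x : size (bits x) = 5.
Proof. by rewrite size_map size_enum_ord. Qed.

Lemma nth_bits x (i : 'I_5) : nth false (bits x) i = x i.
Proof. by rewrite (nth_map i) ?size_enum_ord ?nth_ord_enum. Qed.

Lemma bits_inj : injective bits.
Proof. by move=> x y eq_xy; apply/ffunP => i; rewrite -!nth_bits eq_xy. Qed.

Lemma bits_compl x : bits (compl x) = wcompl (bits x).
Proof. by rewrite /bits /wcompl -map_comp; apply: eq_map => i; rewrite /= ffunE. Qed.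

Lemma bits_const b : bits [ffun=> b] = nseq 5 b.
Proof.
apply: (@eq_from_nth _ false); rewrite ?size_bits ?size_nseq // => i lt_i5.
by rewrite (nth_bits _ (Ordinal lt_i5)) nth_nseq lt_i5 ffunE.
Qed.

Lemma differ_at_bits x y (i : 'I_5) : differ_at (bits x) (bits y) i = (x i != y i).
Proof. by rewrite /differ_at !nth_bits. Qed.

Lemma adj_bits x y : adj x y = wadj (bits x) (bits y).
Proof.
rewrite /adj cardsE cardE /enum_mem size_filter -enumT.
rewrite /wadj size_bits -val_enum_ord count_map; congr (_ == 1).
by apply: eq_count => i; rewrite /= differ_at_bits.
Qed.

Lemma bits_punctured x : (bits x \in punctured_cube) = (x \notin [:: zero_v; one_v]).
Proof.
rewrite mem_filter mem_words size_bits andbT -(mem_map bits_inj).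
by rewrite /zero_v /one_v /= !bits_const.
Qed.

Lemma wcompatible_bits a b c d :
    adj a b -> adj c d ->
    (forall i, has_dir a b i -> has_dir c d i -> antipodal_edges a b c d) ->
  wcompatible (bits a, bits b) (bits c, bits d).
Proof.
move=> adj_ab adj_cd anti; rewrite /wcompatible size_bits.
case: hasP => // -[i]; rewrite mem_iota => /andP[_ lt_i5].
rewrite (differ_at_bits a b (Ordinal lt_i5)) (differ_at_bits c d (Ordinal lt_i5)).
case/andP=> diff_ab diff_cd.
have dir_ab : has_dir a b (Ordinal lt_i5) by rewrite /has_dir adj_ab.
have dir_cd : has_dir c d (Ordinal lt_i5) by rewrite /has_dir adj_cd.
by case: (anti _ dir_ab dir_cd) => -[-> ->]; rewrite !bits_compl /wantipodal eqxx ?orbT.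
Qed.

Lemma edge_tgt_nth c k : k.+1 < size c -> edge_tgt c k = nth zero_v c k.+1.
Proof. by move=> lt_k; rewrite /edge_tgt modn_small. Qed.

Lemma antipodal_cycle_wpath c : antipodal_cycle c -> antipodal_wpath (map bits c).
Proof.
move=> [[_ [uniq_c cycle_c]] anti].
have /sortedP adj_c : sorted adj c.
  by case: c cycle_c {uniq_c anti} => //= x p; rewrite rcons_path => /andP[].
rewrite antipodal_wpathE map_inj_uniq ?uniq_c; last exact: bits_inj.
apply/andP; split.
  by rewrite sorted_map; apply/(sortedP zero_v) => k lt_k; rewrite /= -adj_bits adj_c.
apply/(pairwiseP (bits zero_v, bits zero_v)) => j k.
rewrite !inE size_path_edges size_map !ltn_predRL => lt_j lt_k lt_jk.
rewrite !nth_path_edges ?size_map ?ltn_predRL //.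
rewrite !(nth_map zero_v) ?(ltnW lt_j) ?(ltnW lt_k) //.
apply: wcompatible_bits; rewrite ?adj_c // => i.
rewrite -[nth _ c j]/(edge_src c j) -[nth _ c k]/(edge_src c k) -!edge_tgt_nth //.
by apply: anti; rewrite ?(ltnW lt_j) ?(ltnW lt_k) //; apply/eqP; rewrite ltn_eqF.
Qed.

Lemma antipodal_cycle_indicator c :
    size c = 10 -> antipodal_cycle c -> avoids_01 c ->
  indicator (map bits c) \in antipodal_indicators.
Proof.
move=> size_c anti_c [c_0 c_1]; rewrite mem_dedup; apply: map_f.
rewrite -size_c -(size_map bits); apply: mem_enum_admissible.
  exact: antipodal_cycle_wpath.
apply/allP => _ /mapP[x x_c ->]; rewrite inE bits_punctured !inE negb_or.
by apply/andP; split; apply/eqP => x_01; [move: c_0 | move: c_1]; rewrite -x_01 x_c.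
Qed.

Lemma disjoint_indicators_bits c d :
  vdisjoint c d -> disjoint_indicators (indicator (map bits c)) (indicator (map bits d)).
Proof.
move=> disj_cd; rewrite /disjoint_indicators /indicator zip_map all_map.
apply/allP => w _ /=; apply/negP => /andP[/mapP[x x_c ->] /mapP[y y_d /bits_inj x_y]].
by move: (disj_cd x x_c); rewrite x_y y_d.
Qed.

Theorem proposition20 :
  ~ exists c1 c2 c3 : seq vert,
      [/\ size c1 = 10, size c2 = 10 & size c3 = 10] /\
      [/\ antipodal_cycle c1, antipodal_cycle c2 & antipodal_cycle c3] /\
      [/\ avoids_01 c1, avoids_01 c2 & avoids_01 c3] /\
      [/\ vdisjoint c1 c2, vdisjoint c1 c3 & vdisjoint c2 c3].
Proof.
move=> [c1 [c2 [c3 [[s1 s2 s3] [[a1 a2 a3] [[v1 v2 v3] [d12 d13 d23]]]]]]].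
apply: (no_pairwise_triple_mem antipodal_indicators_no_disjoint_triple
  (antipodal_cycle_indicator s1 a1 v1) (antipodal_cycle_indicator s2 a2 v2)
  (antipodal_cycle_indicator s3 a3 v3));
  exact: disjoint_indicators_bits.
Qed.
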